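(* In an $m$-player layered finite-horizon Markov game, let $\pi^j_t,\pi^j_{t+1}$ ($j\in[m]$) be arbitrary policies of the players in episodes $t$ and $t+1$. Then for any player $i\in[m]$ and any policy $\mu$ of player $i$, $$\big\|q^\mu_{P^i_{t+1}}-q^\mu_{P^i_t}\big\|_\infty\le H^2\sum_{j\ne i}\|\pi^j_{t+1}-\pi^j_t\|_{\infty,1}.$$
   Context: Markov game: horizon $H$; states $\mathcal S=\bigcup_{h=1}^{H+1}\mathcal S_h$ with $\mathcal S_1=\{s_1\}$; players $i\in[m]$ with finite action sets $\mathcal A_i$; for $s\in\mathcal S_h$ and joint action $\mathbf a$, $P(\cdot\mid s,\mathbf a)$ is a distribution over $\mathcal S_{h+1}$. Policies assign $\pi^j(\cdot\mid s)\in\Delta_{\mathcal A_j}$, players act independently. The induced transition kernel of player $i$ in episode $t$ is $P^i_t(\cdot\mid s,a)=\mathbb E_{\mathbf a\sim\boldsymbol\pi_t(\cdot\mid s)}[P(\cdot\mid s,\mathbf a)\mid a^i=a]$, where $\boldsymbol\pi_t(\cdot\mid s)$ is the product of the $\pi^j_t(\cdot\mid s)$. For a single-agent kernel $P'$ and policy $\mu$, $q^\mu_{P'}(s)=\Pr(s_h=s\mid P',\mu,s_1)$ for $s\in\mathcal S_h$, viewed as a vector indexed by $\mathcal S$. $\|\pi-\tilde\pi\|_{\infty,1}=\max_s\|\pi(\cdot\mid s)-\tilde\pi(\cdot\mid s)\|_1$. *)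

From HB Require Import structures.
From mathcomp Require Import all_boot all_order all_algebra.
Set Implicit Arguments. Unset Strict Implicit. Unset Printing Implicit Defensive.
Import Order.TTheory GRing.Theory Num.Theory.
Local Open Scope ring_scope.

Definition joint_action (m : nat) (A : 'I_m -> finType) : finType :=
  {dffun forall j : 'I_m, A j}.

Definition is_policy (R : numDomainType) (S Act : finType) (pol : S -> Act -> R) : Prop :=
  forall s, (forall a, 0 <= pol s a) /\ \sum_(a : Act) pol s a = 1.

(* Layered finite-horizon Markov game: lay s = h means s \in S_h, 1 <= h <= H+1,
   S_1 = {s1}; for s \in S_h with h <= H, P(.|s,a) is a distribution on S_{h+1}. *)
Definition layered_game (R : numDomainType) (S : finType) (H : nat)
  (lay : S -> nat) (s1 : S) (Ja : finType) (P : S -> Ja -> S -> R) : Prop :=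
  (forall s, (1 <= lay s <= H.+1)%N) /\
  (forall s, lay s = 1%N <-> s = s1) /\
  (forall s a, (lay s <= H)%N ->
     (forall s', 0 <= P s a s') /\ \sum_(s' : S) P s a s' = 1 /\
     (forall s', P s a s' != 0 -> lay s' = (lay s).+1)).

(* Induced transition kernel of player i:
   P^i(s'|s,a) = E_{b ~ prod_j pi j (.|s)} [ P(s'|s,b) | b^i = a ]
               = sum_{b : b i = a} (prod_{j <> i} pi j s (b j)) P(s'|s,b)
   (players act independently). *)
Definition induced_kernel (R : numDomainType) (m : nat) (A : 'I_m -> finType)
  (S : finType) (P : S -> joint_action A -> S -> R)
  (pi : forall j : 'I_m, S -> A j -> R) (i : 'I_m) : S -> A i -> S -> R :=
  fun s a s' =>
    \sum_(b : joint_action A | b i == a)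
       (\prod_(j : 'I_m | j != i) pi j s (b j)) * P s b s'.

Arguments induced_kernel [R m A S] P pi i.

(* State distribution at step n+1 (n = 0 is step 1) under single-agent kernel
   Pk and policy mu, starting at s1. *)
Fixpoint state_dist (R : numDomainType) (S Act : finType) (s1 : S)
  (Pk : S -> Act -> S -> R) (mu : S -> Act -> R) (n : nat) : S -> R :=
  match n with
  | O => fun s => if s == s1 then 1 else 0
  | n'.+1 => fun s =>
      \sum_(s0 : S) state_dist s1 Pk mu n' s0 *
                    \sum_(a : Act) mu s0 a * Pk s0 a s
  end.

(* q^mu_{Pk}(s) = Pr(s_h = s | Pk, mu, s1) for s \in S_h. *)
Definition occupancy (R : numDomainType) (S Act : finType) (lay : S -> nat) (s1 : S)
  (Pk : S -> Act -> S -> R) (mu : S -> Act -> R) : S -> R :=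
  fun s => state_dist s1 Pk mu (lay s).-1 s.

Definition sup_norm (R : realDomainType) (S : finType) (v : S -> R) : R :=
  \big[Num.max/0]_(s : S) `|v s|.

Definition pol_dist (R : realDomainType) (S Act : finType) (p p' : S -> Act -> R) : R :=
  \big[Num.max/0]_(s : S) \sum_(a : Act) `|p s a - p' s a|.

(* The induced kernel P^i(. | s, a) is the mixture of P(. | s, b) under the law
   of the joint action b given b^i = a, a product of the opponents' policies at s.
   A hybrid argument, switching one factor at a time, bounds the l1 distance of two
   product laws by the sum of the l1 distances of their factors, so consecutive
   induced kernels are l1-close up to D = sum_{j <> i} ||pi^j_{t+1} - pi^j_t||_{oo,1}.
   Layer by layer, the state distributions then drift apart by at most D per step:
   the error accumulated so far is not increased by a stochastic kernel.  Hence
   |q_{t+1}(s) - q_t(s)| <= (h - 1) D <= H D <= H^2 D for s in S_h. *)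

From HB Require Import structures.
From mathcomp Require Import all_boot all_order all_algebra.
Import Order.TTheory GRing.Theory Num.Theory.
Local Open Scope ring_scope.
Set Implicit Arguments. Unset Strict Implicit.

Definition is_distr (R : numDomainType) (T : finType) (v : T -> R) : Prop :=
  (forall x, 0 <= v x) /\ \sum_x v x = 1.

Definition l1_dist (R : numDomainType) (T : finType) (v w : T -> R) : R :=
  \sum_x `|v x - w x|.

Definition mix (R : numDomainType) (S T : finType) (d : S -> R) (K : S -> T -> R) :
    T -> R :=
  fun t => \sum_s d s * K s t.

Section Distributions.
Variable R : numDomainType.

Lemma point_mass_distr (T : finType) (a : T) :
  is_distr (fun x : T => if x == a then 1 else 0 : R).
Proof.
split=> [x|]; first by case: eqP.
by rewrite (bigD1 a) //= eqxx big1 ?addr0 // => x /negbTE ->.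
Qed.

Lemma l1_distxx (T : finType) (v : T -> R) : l1_dist v v = 0.
Proof. by apply: big1 => x _; rewrite subrr normr0. Qed.

Lemma normr_sub_le_l1_dist (T : finType) (v w : T -> R) x : `|v x - w x| <= l1_dist v w.
Proof. by rewrite /l1_dist (bigD1 x) //= lerDl sumr_ge0. Qed.

Lemma eq_is_distr (T : finType) (v w : T -> R) : v =1 w -> is_distr v -> is_distr w.
Proof.
by move=> vw [v_ge0 v_sum1]; split=> [x|]; rewrite -?vw // -v_sum1; apply: eq_bigr.
Qed.

Lemma eq_l1_dist (T : finType) (v v' w w' : T -> R) :
  v =1 v' -> w =1 w' -> l1_dist v w = l1_dist v' w'.
Proof. by move=> vv' ww'; apply: eq_bigr => x _; rewrite vv' ww'. Qed.

Variables S T : finType.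
Implicit Types (d e : S -> R) (K : S -> T -> R).

Lemma mix_distr d K : is_distr d -> (forall s, d s != 0 -> is_distr (K s)) ->
  is_distr (mix d K).
Proof.
move=> [d_ge0 d_sum1] dK; split=> [t|].
  apply: sumr_ge0 => s _; have [->|/dK [K_ge0 _]] := eqVneq (d s) 0.
    by rewrite mul0r.
  exact: mulr_ge0.
rewrite /mix exchange_big /= -[RHS]d_sum1; apply: eq_bigr => s _.
have [->|/dK [_ K_sum1]] := eqVneq (d s) 0.
  by rewrite big1 // => t _; rewrite mul0r.
by rewrite -big_distrr /= K_sum1 mulr1.
Qed.

Lemma mix_eq0 d K t : (forall s, d s != 0 -> K s t = 0) -> mix d K t = 0.
Proof.
by move=> dK; apply: big1 => s _; have [->|/dK ->] := eqVneq (d s) 0;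
  rewrite ?mul0r ?mulr0.
Qed.

(* The difference splits as [(e - d) K' + d (K' - K)]; the first term is
   contracted by [K'], which is stochastic wherever [e] and [d] differ. *)
Lemma l1_dist_mix d e K K' (D : R) :
  is_distr d ->
  (forall s, e s != d s -> is_distr (K' s)) ->
  (forall s, d s != 0 -> l1_dist (K' s) (K s) <= D) ->
  l1_dist (mix e K') (mix d K) <= l1_dist e d + D.
Proof.
move=> [d_ge0 d_sum1] eK' dK.
have pointwise t : `|mix e K' t - mix d K t|
    <= \sum_s (`|e s - d s| * `|K' s t| + d s * `|K' s t - K s t|).
  rewrite -sumrB; apply: le_trans (ler_norm_sum _ _ _) _; apply: ler_sum => s _.
  have -> : e s * K' s t - d s * K s t = (e s - d s) * K' s t + d s * (K' s t - K s t).
    by rewrite mulrBl mulrBr addrA subrK.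
  by apply: le_trans (ler_normD _ _) _; rewrite !normrM (ger0_norm (d_ge0 s)).
apply: le_trans (ler_sum _ (fun t _ => pointwise t)) _.
rewrite exchange_big /=; under eq_bigr do rewrite big_split /=.
rewrite big_split /=; apply: lerD.
  apply: ler_sum => s _; rewrite -big_distrr /=.
  have [->|/eK' [K'_ge0 K'_sum1]] := eqVneq (e s) (d s).
    by rewrite subrr normr0 mul0r.
  rewrite (eq_bigr _ (fun t _ => ger0_norm (K'_ge0 t))) K'_sum1 mulr1.
  exact: lexx.
rewrite -[D]mul1r -d_sum1 big_distrl /=; apply: ler_sum => s _.
rewrite -big_distrr /=; have [->|/dK] := eqVneq (d s) 0; first by rewrite !mul0r.
exact: ler_wpM2l.
Qed.

End Distributions.

Lemma sum_prod_dffun (R : comPzSemiRingType) (I : finType) (T_ : I -> finType)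
    (g : forall i, T_ i -> R) :
  \sum_(b : {dffun forall i, T_ i}) \prod_i g i (b i) = \prod_i \sum_(x : T_ i) g i x.
Proof.
pose P_ i := [ffun x : T_ i => g i x].
rewrite (reindex (@dffun_of_fprod I T_)); last exact/onW_bij/dffun_of_fprod_bij.
transitivity (\sum_(t : fprod T_) \prod_(i in I) P_ i (t i)).
  by apply: eq_bigr => t _; apply: eq_bigr => i _; rewrite !ffunE.
rewrite big_fprod.
transitivity (\prod_i \sum_(x in tagged_with T_ i) untag 0 (P_ i) x).
  by rewrite bigA_distr_big_dep.
apply: eq_bigr => i _; rewrite -(big_tag (fun i => P_ i)).
by apply: eq_bigr => x _; rewrite ffunE.
Qed.

Section JointLaw.
Variables (R : numDomainType) (I : finType) (T_ : I -> finType).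
Implicit Types g : forall i, T_ i -> R.

Lemma prod_dfwith g j (x : T_ j -> R) (b : forall i, T_ i) :
  \prod_i dfwith g x i (b i) = x (b j) * \prod_(i | i != j) g i (b i).
Proof.
rewrite (bigD1 j) //= dfwith_in; congr (_ * _).
by apply: eq_bigr => i ij; rewrite dfwith_out // eq_sym.
Qed.

Lemma sum_prod_dffunD1 g j (x : T_ j -> R) :
  \sum_(b : {dffun forall i, T_ i}) x (b j) * \prod_(i | i != j) g i (b i)
  = (\sum_y x y) * \prod_(i | i != j) \sum_y g i y.
Proof.
rewrite -(eq_bigr _ (fun (b : {dffun forall i, T_ i}) _ => prod_dfwith g x b)).
rewrite sum_prod_dffun (bigD1 j) //= dfwith_in; congr (_ * _).
by apply: eq_bigr => i ij; rewrite dfwith_out // eq_sym.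
Qed.

Definition joint_law g : {dffun forall i, T_ i} -> R := fun b => \prod_i g i (b i).

Lemma joint_law_distr g : (forall i, is_distr (g i)) -> is_distr (joint_law g).
Proof.
move=> gD; split=> [b|].
  by apply: prodr_ge0 => i _; case: (gD i).
by rewrite sum_prod_dffun big1 // => i _; case: (gD i).
Qed.

(* Hybrid argument: switch the factors from [g] to [g'] one at a time, in the
   order given by [enum_rank]; each switch costs the l1 distance of one factor. *)
Lemma l1_dist_joint_law g (g' : forall i, T_ i -> R) :
  (forall i, is_distr (g i)) -> (forall i, is_distr (g' i)) ->
  l1_dist (joint_law g') (joint_law g) <= \sum_i l1_dist (g' i) (g i).
Proof.
move=> gD g'D.
pose e k i := if (enum_rank i < k)%N then g' i else g i.
have e_ge0 k i x : 0 <= e k i x.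
  by rewrite /e; case: ifP => _; [case: (g'D i) | case: (gD i)].
have e_sum1 k i : \sum_x e k i x = 1.
  by rewrite /e; case: ifP => _; [case: (g'D i) | case: (gD i)].
have telescope b : joint_law g' b - joint_law g b
    = \sum_(k < #|I|) (joint_law (e k.+1) b - joint_law (e k) b).
  rewrite -(big_mkord xpredT (fun k => joint_law (e k.+1) b - joint_law (e k) b)).
  rewrite telescope_sumr //; congr (_ - _); apply: eq_bigr => i _.
  by rewrite /e ltn_ord.
have switch (k : 'I_#|I|) b : let j := enum_val k in
    joint_law (e k.+1) b - joint_law (e k) b
    = (g' j (b j) - g j (b j)) * \prod_(i | i != j) e k i (b i).
  move=> j; rewrite /joint_law (bigD1 j) //= [X in _ - X](bigD1 j) //=.
  rewrite /e enum_valK ltnSn ltnn mulrBl; congr (_ * _ - _).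
  apply: eq_bigr => i ij; rewrite ltnS leq_eqVlt (inj_eq val_inj).
  suff /negbTE -> : enum_rank i != k by [].
  by apply: contraNneq ij => ki; rewrite /j -ki enum_rankK.
rewrite /l1_dist; under eq_bigr do rewrite telescope.
apply: le_trans (ler_sum _ (fun b _ => ler_norm_sum _ _ _)) _.
rewrite exchange_big /= (big_enum_val (fun i => l1_dist (g' i) (g i))).
apply: ler_sum => k _; under eq_bigr => b _ do
  rewrite switch normrM (ger0_norm (prodr_ge0 _ (fun i _ => e_ge0 k i (b i)))).
rewrite (sum_prod_dffunD1 (e k) (fun y => `|g' _ y - g _ y|)).
by rewrite [X in _ * X]big1 ?mulr1.
Qed.

End JointLaw.

Definition layered_kernel (R : numDomainType) (S Act : finType) (H : nat)
    (lay : S -> nat) (Q : S -> Act -> S -> R) : Prop :=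
  forall s a, (lay s <= H)%N ->
    is_distr (Q s a) /\ (forall s', Q s a s' != 0 -> lay s' = (lay s).+1).

Lemma layered_game_distr (R : numDomainType) (S Ja : finType) (H : nat)
    (lay : S -> nat) (s1 : S) (P : S -> Ja -> S -> R) s b :
  layered_game H lay s1 P -> (lay s <= H)%N -> is_distr (P s b).
Proof. by move=> [_ [_ P_layered]] /(P_layered s b) [? [? _]]. Qed.

Definition cond_joint_law (R : numDomainType) (m : nat) (A : 'I_m -> finType)
    (S : finType) (pi : forall j, S -> A j -> R) (i : 'I_m) (s : S) (a : A i) :
    joint_action A -> R :=
  joint_law (dfwith (fun j => pi j s) (fun x : A i => if x == a then 1 else 0)).
Arguments cond_joint_law {R m A S} pi i s a.

Section InducedKernel.
Variables (R : numDomainType) (m : nat) (A : 'I_m -> finType) (S : finType).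
Variables (P : S -> joint_action A -> S -> R) (i : 'I_m).
Implicit Types pi : forall j, S -> A j -> R.

Lemma induced_kernelE pi s a :
  induced_kernel P pi i s a =1 mix (cond_joint_law pi i s a) (P s).
Proof.
move=> s'; rewrite /induced_kernel big_mkcond; apply: eq_bigr => b _.
rewrite /cond_joint_law /joint_law prod_dfwith.
by case: eqP; rewrite ?mul1r ?mul0r.
Qed.

Lemma cond_joint_law_distr pi s a :
  (forall j, is_policy (pi j)) -> is_distr (cond_joint_law pi i s a).
Proof.
move=> pi_pol; apply: joint_law_distr => j.
by case: dfwithP => [|k _]; [exact: point_mass_distr | exact: pi_pol].
Qed.

Lemma l1_dist_cond_joint_law pi pi' s a :
  (forall j, is_policy (pi j)) -> (forall j, is_policy (pi' j)) ->
  l1_dist (cond_joint_law pi' i s a) (cond_joint_law pi i s a)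
  <= \sum_(j | j != i) l1_dist (pi' j s) (pi j s).
Proof.
move=> pi_pol pi'_pol; apply: le_trans (l1_dist_joint_law _ _) _.
- by move=> j; case: dfwithP => [|k _]; [exact: point_mass_distr | exact: pi_pol].
- by move=> j; case: dfwithP => [|k _]; [exact: point_mass_distr | exact: pi'_pol].
rewrite (bigD1 i) //= !dfwith_in l1_distxx add0r.
by apply: ler_sum => j ij; rewrite !dfwith_out // eq_sym.
Qed.

Lemma l1_dist_induced_kernel pi pi' s a :
  (forall j, is_policy (pi j)) -> (forall j, is_policy (pi' j)) ->
  (forall b, is_distr (P s b)) ->
  l1_dist (induced_kernel P pi' i s a) (induced_kernel P pi i s a)
  <= \sum_(j | j != i) l1_dist (pi' j s) (pi j s).
Proof.
move=> pi_pol pi'_pol P_distr.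
rewrite (eq_l1_dist (induced_kernelE _ _ _) (induced_kernelE _ _ _)).
apply: le_trans (l1_dist_mix (D := 0) (cond_joint_law_distr s a pi_pol) _ _) _.
- by move=> b _; exact: P_distr.
- by move=> b _; rewrite l1_distxx.
by rewrite addr0 l1_dist_cond_joint_law.
Qed.

Lemma induced_kernel_layered H lay s1 pi :
  layered_game H lay s1 P -> (forall j, is_policy (pi j)) ->
  layered_kernel H lay (induced_kernel P pi i).
Proof.
move=> game pi_pol s a s_le_H; split=> [|s'].
  apply: eq_is_distr (mix_distr (cond_joint_law_distr s a pi_pol) _) => [s'|b _].
    by rewrite induced_kernelE.
  exact: layered_game_distr game s_le_H.
rewrite induced_kernelE; apply: contraNeq => s'_off.
apply/eqP/mix_eq0 => b _; apply: contraNeq s'_off.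
by have [_ [_ /(_ s b s_le_H) [_ [_ P_succ]]]] := game; move/P_succ => ->.
Qed.

End InducedKernel.

Definition policy_kernel (R : numDomainType) (S Act : finType)
    (mu : S -> Act -> R) (Q : S -> Act -> S -> R) : S -> S -> R :=
  fun s => mix (mu s) (Q s).

Section StateDistribution.
Variables (R : numDomainType) (S Act : finType) (H : nat) (lay : S -> nat) (s1 : S).
Variable mu : S -> Act -> R.
Hypotheses (lay_s1 : lay s1 = 1%N) (mu_policy : is_policy mu).
Implicit Types Q : S -> Act -> S -> R.

Lemma state_distS Q n :
  state_dist s1 Q mu n.+1 = mix (state_dist s1 Q mu n) (policy_kernel mu Q).
Proof. by []. Qed.

Lemma policy_kernel_distr Q s :
  layered_kernel H lay Q -> (lay s <= H)%N -> is_distr (policy_kernel mu Q s).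
Proof.
by move=> Q_layered s_le_H; apply: mix_distr => // a _; case: (Q_layered s a).
Qed.

Lemma l1_dist_policy_kernel Q Q' s (D : R) :
  (forall a, l1_dist (Q' s a) (Q s a) <= D) ->
  l1_dist (policy_kernel mu Q' s) (policy_kernel mu Q s) <= D.
Proof.
move=> QQ'; rewrite -[D]add0r -(l1_distxx (mu s)).
by apply: l1_dist_mix => // a; rewrite eqxx.
Qed.

Lemma state_dist_layered Q : layered_kernel H lay Q -> forall n, (n <= H)%N ->
  is_distr (state_dist s1 Q mu n) /\
  (forall s, state_dist s1 Q mu n s != 0 -> lay s = n.+1).
Proof.
move=> Q_layered; elim=> [_|n IHn n_lt_H].
  split; first exact: point_mass_distr.
  by move=> s /=; case: ifP => [/eqP -> _ | _]; rewrite ?eqxx.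
have [d_distr d_layer] := IHn (ltnW n_lt_H).
rewrite state_distS; split.
  apply: mix_distr => // s /d_layer lay_s.
  by apply: policy_kernel_distr; rewrite // lay_s.
move=> s'; apply: contraNeq => s'_off; apply/eqP/mix_eq0 => s /d_layer lay_s.
have s_le_H : (lay s <= H)%N by rewrite lay_s.
apply: mix_eq0 => a _; have [_ Q_succ] := Q_layered s a s_le_H.
by apply: contraNeq s'_off => /Q_succ ->; rewrite lay_s.
Qed.

Lemma l1_dist_state_dist Q Q' (D : R) :
  layered_kernel H lay Q -> layered_kernel H lay Q' ->
  (forall s a, (lay s <= H)%N -> l1_dist (Q' s a) (Q s a) <= D) ->
  forall n, (n <= H)%N ->
  l1_dist (state_dist s1 Q' mu n) (state_dist s1 Q mu n) <= n%:R * D.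
Proof.
move=> Q_layered Q'_layered QQ'; elim=> [_|n IHn n_lt_H].
  by rewrite l1_distxx mul0r.
have [d_distr d_layer] := state_dist_layered Q_layered (ltnW n_lt_H).
have [_ e_layer] := state_dist_layered Q'_layered (ltnW n_lt_H).
have on_layer s : lay s = n.+1 -> (lay s <= H)%N by move->.
rewrite !state_distS (mulrSr 1 n) mulrDl mul1r.
apply: le_trans (l1_dist_mix d_distr _ _) _.
- move=> s ed; apply: policy_kernel_distr (on_layer _ _) => //.
  have [e0|/e_layer //] := eqVneq (state_dist s1 Q' mu n s) 0.
  by apply: d_layer; rewrite eq_sym -e0.
- move=> s /d_layer /on_layer s_le_H.
  by apply: l1_dist_policy_kernel => a; exact: QQ'.
by rewrite lerD2r IHn // ltnW.
Qed.

End StateDistribution.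

Lemma l1_dist_le_pol_dist (R : realDomainType) (S Act : finType)
    (p p' : S -> Act -> R) s :
  l1_dist (p s) (p' s) <= pol_dist p p'.
Proof. exact: le_bigmax. Qed.

Lemma pol_dist_ge0 (R : realDomainType) (S Act : finType) (p p' : S -> Act -> R) :
  0 <= pol_dist p p'.
Proof. exact: bigmax_ge_id. Qed.

Theorem lemma21 (R : realFieldType) (m : nat) (A : 'I_m -> finType)
  (S : finType) (H : nat) (lay : S -> nat) (s1 : S)
  (P : S -> joint_action A -> S -> R)
  (pi_t pi_t1 : forall j : 'I_m, S -> A j -> R)
  (i : 'I_m) (mu : S -> A i -> R) :
  layered_game H lay s1 P ->
  (forall j, is_policy (pi_t j)) ->
  (forall j, is_policy (pi_t1 j)) ->
  is_policy mu ->
  sup_norm (fun s => occupancy lay s1 (induced_kernel P pi_t1 i) mu s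
                     - occupancy lay s1 (induced_kernel P pi_t i) mu s)
  <= (H ^ 2)%:R * \sum_(j : 'I_m | j != i) pol_dist (pi_t1 j) (pi_t j).
Proof.
move=> game pi_t_pol pi_t1_pol mu_pol.
have [lay_range [lay_1 _]] := game.
have lay_s1 : lay s1 = 1%N by apply/lay_1.
set D := \sum_(j | j != i) _.
have D_ge0 : 0 <= D by apply: sumr_ge0 => j _; exact: pol_dist_ge0.
have kernel_step s a : (lay s <= H)%N ->
    l1_dist (induced_kernel P pi_t1 i s a) (induced_kernel P pi_t i s a) <= D.
  move=> s_le_H; apply: le_trans (l1_dist_induced_kernel a pi_t_pol pi_t1_pol _) _.
    by move=> b; exact: layered_game_distr game s_le_H.
  by apply: ler_sum => j _; exact: l1_dist_le_pol_dist.
have H_le_H2 : (H <= H ^ 2)%N.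
  by have [->|H_gt0] := posnP H; last exact: (@leq_pexp2l H 1 2).
apply: bigmax_le => [|s _]; first by rewrite mulr_ge0.
have n_le_H : ((lay s).-1 <= H)%N by case/andP: (lay_range s) => _; case: (lay s).
rewrite /occupancy; set n := (lay s).-1.
apply: le_trans
  (normr_sub_le_l1_dist (state_dist s1 _ mu n) (state_dist s1 _ mu n) s) _.
apply: le_trans (l1_dist_state_dist lay_s1 mu_pol
  (induced_kernel_layered game pi_t_pol) (induced_kernel_layered game pi_t1_pol)
  kernel_step n_le_H) _.
by rewrite ler_wpM2r // ler_nat (leq_trans n_le_H).
Qed.
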